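(* Let $G$ be a weakly modular graph. Then every BFS order of the vertices of $G$ is a distance-preserving ordering.
   Context: Graphs are simple, undirected, connected, possibly infinite; $d$ is graph distance, $N(x)$ the set of neighbors of $x$. Weakly modular: for every vertex $u$, (TC) for $v,w$ with $1=d(v,w)<d(u,v)=d(u,w)$ there is a common neighbor $x$ of $v,w$ with $d(u,x)=d(u,v)-1$, and (QC) for $v,w,z$ with $d(v,z)=d(w,z)=1$, $2=d(v,w)\le d(u,v)=d(u,w)=d(u,z)-1$ there is a common neighbor $x$ of $v,w$ with $d(u,x)=d(u,v)-1$. A well-order $\preceq$ on $V(G)$ is a BFS order if there is a family $\{A_x: x\in V(G)\}$ of subsets of $V(G)$ such that for every $x$: (S1) $x\in A_x$; (S2) if $x\preceq y$ then $A_x$ is an initial segment of $A_y$; (S3) $A_x=A_{(x)}\cup N(x)$, where $A_{(x)}=\{x\}$ if $x$ is the least element and $A_{(x)}=\bigcup_{y\prec x}A_y$ otherwise. A well-order $\prec$ is distance-preserving if for every vertex $v$ the subgraph of $G$ induced by $\{u: u\preceq v\}$ is an isometric subgraph of $G$. *)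

Set Implicit Arguments.

Section Graphs.
Variable V : Type.

Inductive walk (adj : V -> V -> Prop) : nat -> V -> V -> Prop :=
| walk0 : forall x, walk adj 0 x x
| walkS : forall n x y z, adj x y -> walk adj n y z -> walk adj (S n) x z.

Definition dist (adj : V -> V -> Prop) (u v : V) (n : nat) : Prop :=
  walk adj n u v /\ forall m, walk adj m u v -> n <= m.

Definition simple_graph (adj : V -> V -> Prop) : Prop :=
  (forall x y, adj x y -> adj y x) /\ (forall x, ~ adj x x).

Definition connected (adj : V -> V -> Prop) : Prop :=
  forall u v, exists n, walk adj n u v.

Definition TC (adj : V -> V -> Prop) (u : V) : Prop :=
  forall v w k, dist adj v w 1 -> 1 < k -> dist adj u v k -> dist adj u w k ->
    exists x, adj v x /\ adj w x /\ dist adj u x (k - 1).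

Definition QC (adj : V -> V -> Prop) (u : V) : Prop :=
  forall v w z k, dist adj v z 1 -> dist adj w z 1 -> dist adj v w 2 -> 2 <= k ->
    dist adj u v k -> dist adj u w k -> dist adj u z (k + 1) ->
    exists x, adj v x /\ adj w x /\ dist adj u x (k - 1).

Definition weakly_modular (adj : V -> V -> Prop) : Prop :=
  forall u, TC adj u /\ QC adj u.

Definition well_order (le : V -> V -> Prop) : Prop :=
  (forall x, le x x) /\
  (forall x y, le x y -> le y x -> x = y) /\
  (forall x y z, le x y -> le y z -> le x z) /\
  (forall x y, le x y \/ le y x) /\
  (forall P : V -> Prop, (exists x, P x) -> exists m, P m /\ forall y, P y -> le m y).

Definition is_least (le : V -> V -> Prop) (x : V) : Prop := forall y, le x y.

Definition initial_segment (le : V -> V -> Prop) (B C : V -> Prop) : Prop :=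
  (forall a, B a -> C a) /\
  (forall a b, B a -> C b -> le b a -> B b).

Definition A_paren (le : V -> V -> Prop) (A : V -> V -> Prop) (x z : V) : Prop :=
  (is_least le x /\ z = x) \/
  (~ is_least le x /\ exists y, le y x /\ y <> x /\ A y z).

Definition BFS_order (adj : V -> V -> Prop) (le : V -> V -> Prop) : Prop :=
  well_order le /\
  exists A : V -> V -> Prop,
    (forall x, A x x) /\
    (forall x y, le x y -> initial_segment le (A x) (A y)) /\
    (forall x z, A x z <-> (A_paren le A x z \/ adj x z)).

Definition induced (adj : V -> V -> Prop) (S : V -> Prop) : V -> V -> Prop :=
  fun a b => S a /\ S b /\ adj a b.

Definition isometric (adj : V -> V -> Prop) (S : V -> Prop) : Prop :=
  forall a b n, S a -> S b -> dist adj a b n -> dist (induced adj S) a b n.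

Definition distance_preserving (adj : V -> V -> Prop) (le : V -> V -> Prop) : Prop :=
  forall v, isometric adj (fun u => le u v).

End Graphs.

From Stdlib Require Import Arith Lia Wf_nat Classical ClassicalEpsilon.

(* For distances, a BFS order is captured by its parent function: [parent x], the vertex
   whose visit discovered [x], is the earliest neighbour of [x], parents are monotone in
   the order, and the level d(r, x) drops by one from [x] to its parent.
   Fix [v] and call a vertex early if it was discovered before [parent v] was visited;
   vertices before [v] that are not early are neighbours of [parent v].  For an early [u]
   at distance k >= 2 from [v], climb the ancestors of [u].  If each step moves one
   further from [v], then [v] lies k levels above [u], so every neighbour of [u] on a
   geodesic to [v] is early.  Otherwise the first ancestor that fails to recede is
   either closer to [v] or, by the triangle condition with base point [v], has a common
   neighbour closer to [v]; the triangle and quadrangle conditions then push this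
   descent back down the ancestor chain to an early neighbour of [u] one step closer to
   [v].  Hence every [u] before [v] has a geodesic to [v] whose last inner vertex
   precedes [v], and induction on the distance makes every initial segment isometric. *)

Set Implicit Arguments.
Unset Strict Implicit.

Section Walks.
Variables (V : Type) (R : V -> V -> Prop).

Lemma walk_snoc n x y z : walk R n x y -> R y z -> walk R (S n) x z.
Proof.
  intros W; revert z; induction W as [x | n x y' y Hxy W IH]; intros z Hz.
  - apply walkS with z; [exact Hz | apply walk0].
  - apply walkS with y'; [exact Hxy | apply IH, Hz].
Qed.

Lemma walk_app n m x y z : walk R n x y -> walk R m y z -> walk R (n + m) x z.
Proof.
  intros W; revert m z; induction W as [x | n x y' y Hxy W IH]; intros m z W'.
  - exact W'.
  - apply walkS with y'; [exact Hxy | apply IH, W'].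
Qed.

Lemma walk_rev n x y : (forall a b, R a b -> R b a) -> walk R n x y -> walk R n y x.
Proof.
  intros Rsym W; induction W as [x | n x y' y Hxy W IH].
  - apply walk0.
  - apply walk_snoc with y'; [exact IH | apply Rsym, Hxy].
Qed.

Lemma walk_mono (R' : V -> V -> Prop) n x y :
  (forall a b, R a b -> R' a b) -> walk R n x y -> walk R' n x y.
Proof.
  intros Hsub W; induction W as [x | n x y' y Hxy W IH].
  - apply walk0.
  - apply walkS with y'; [apply Hsub, Hxy | exact IH].
Qed.

End Walks.

Lemma prefix_or_first_failure (P : nat -> Prop) j : P 0 ->
  (forall l, l <= j -> P l) \/
  exists i, i < j /\ (forall l, l <= i -> P l) /\ ~ P (S i).
Proof.
  intros P0; induction j as [|j [IH | (i & Hij & Hpre & Hfail)]].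
  - left; intros l Hl; replace l with 0 by lia; exact P0.
  - destruct (classic (P (S j))) as [HP | HP].
    + left; intros l Hl; destruct (Nat.eq_dec l (S j)) as [-> | Hne]; [exact HP | apply IH; lia].
    + right; exists j; auto.
  - right; exists i; split; [lia | auto].
Qed.

Definition bfs_parent (V : Type) (adj le : V -> V -> Prop) (p : V -> V) : Prop :=
  (forall x, le (p x) x) /\
  (forall x y, adj y x -> le (p x) y) /\
  (forall x y, le x y -> le (p x) (p y)) /\
  (forall x, ~ is_least le x -> adj (p x) x).

Section Discoverer.
Variables (V : Type) (adj le A : V -> V -> Prop).
Hypothesis le_wo : well_order le.
Hypothesis A_refl : forall x, A x x.
Hypothesis A_segment : forall x y, le x y -> initial_segment le (A x) (A y).
Hypothesis A_step : forall x z, A x z <-> (A_paren le A x z \/ adj x z).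

Lemma A_down_closed x a c : A x a -> le c a -> A x c.
Proof.
  intros Ha Hca; destruct le_wo as (_ & _ & _ & le_total & _).
  destruct (le_total x c) as [Hxc | Hcx].
  - exact (proj2 (A_segment Hxc) a c Ha (A_refl c) Hca).
  - exact (proj1 (A_segment Hcx) c (A_refl c)).
Qed.

Lemma discoverer_exists x : exists y, A y x /\ forall z, A z x -> le y z.
Proof. destruct le_wo as (_ & _ & _ & _ & le_min); apply le_min; exists x; apply A_refl. Qed.

Definition discoverer (x : V) : V :=
  proj1_sig (constructive_indefinite_description _ (discoverer_exists x)).

Lemma discoverer_spec x : A (discoverer x) x /\ forall z, A z x -> le (discoverer x) z.
Proof. exact (proj2_sig (constructive_indefinite_description _ (discoverer_exists x))). Qed.

Lemma discoverer_bfs_parent : bfs_parent adj le discoverer.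
Proof.
  destruct le_wo as (_ & le_antisym & _ & _ & _).
  split; [|split; [|split]].
  - intros x; apply discoverer_spec, A_refl.
  - intros x y Hyx; apply discoverer_spec, A_step; right; exact Hyx.
  - intros x y Hxy; apply discoverer_spec.
    apply A_down_closed with y; [apply discoverer_spec | exact Hxy].
  - intros x Hx; destruct (proj1 (A_step _ _) (proj1 (discoverer_spec x)))
      as [[[Hleast Heq] | (_ & y & Hy & Hne & HAy)] | Hadj]; [ | | exact Hadj].
    { rewrite <- Heq in Hleast; contradiction. }
    exfalso; apply Hne, le_antisym; [exact Hy | apply discoverer_spec, HAy].
Qed.

End Discoverer.

Lemma BFS_order_parent (V : Type) (adj le : V -> V -> Prop) :
  BFS_order adj le -> exists p, bfs_parent adj le p.
Proof.
  intros (le_wo & A & A_refl & A_segment & A_step).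
  exact (ex_intro _ _ (discoverer_bfs_parent (adj := adj) le_wo A_refl A_segment A_step)).
Qed.

Section DistancePreserving.
Variables (V : Type) (adj : V -> V -> Prop).
Hypothesis adj_sym : forall x y, adj x y -> adj y x.
Hypothesis adj_irrefl : forall x, ~ adj x x.
Hypothesis adj_conn : connected adj.

Lemma dist_exists u v : exists n, dist adj u v n.
Proof.
  destruct (dec_inh_nat_subset_has_unique_least_element (fun n => walk adj n u v))
    as (n & [Hn Hmin] & _); [intros n; apply classic | apply adj_conn |].
  exists n; split; assumption.
Qed.

Definition gdist (u v : V) : nat :=
  proj1_sig (constructive_indefinite_description _ (dist_exists u v)).

Lemma gdist_spec u v : dist adj u v (gdist u v).
Proof. exact (proj2_sig (constructive_indefinite_description _ (dist_exists u v))). Qed.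

Lemma gdist_walk u v : walk adj (gdist u v) u v.
Proof. apply gdist_spec. Qed.

Lemma gdist_min n u v : walk adj n u v -> gdist u v <= n.
Proof. apply gdist_spec. Qed.

Lemma dist_gdist u v n : dist adj u v n -> gdist u v = n.
Proof.
  intros [Hn Hmin]; apply Nat.le_antisymm; [apply gdist_min, Hn | apply Hmin, gdist_walk].
Qed.

Lemma dist_of_gdist u v n : gdist u v = n -> dist adj u v n.
Proof. intros <-; apply gdist_spec. Qed.

Lemma gdist_refl u : gdist u u = 0.
Proof. pose proof (gdist_min (walk0 adj u)); lia. Qed.

Lemma gdist_eq0 u v : gdist u v = 0 -> u = v.
Proof. intros H; pose proof (gdist_walk u v) as W; rewrite H in W; inversion W; reflexivity. Qed.

Lemma gdist_adj u v : adj u v -> gdist u v = 1.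
Proof.
  intros Huv; pose proof (gdist_min (walkS u Huv (walk0 adj v))).
  destruct (gdist u v) eqn:E; [apply gdist_eq0 in E; subst; contradiction (adj_irrefl Huv) | lia].
Qed.

Lemma gdist_eq1 u v : gdist u v = 1 -> adj u v.
Proof.
  intros H; pose proof (gdist_walk u v) as W; rewrite H in W.
  inversion W as [| ? ? y ? Huy W0]; inversion W0; subst; exact Huy.
Qed.

Lemma gdist_sym u v : gdist u v = gdist v u.
Proof.
  apply Nat.le_antisymm; apply gdist_min, walk_rev; auto using gdist_walk.
Qed.

Lemma gdist_triangle u v w : gdist u w <= gdist u v + gdist v w.
Proof. apply gdist_min, walk_app with v; apply gdist_walk. Qed.

Lemma gdist_adj_le u x y : adj x y -> gdist u y <= S (gdist u x).
Proof. intros Hxy; pose proof (gdist_triangle u x y); rewrite (gdist_adj Hxy) in *; lia. Qed.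

Lemma gdist_step u v k : gdist u v = S k -> exists x, adj u x /\ gdist x v = k.
Proof.
  intros H; pose proof (gdist_walk u v) as W; rewrite H in W.
  inversion W as [| ? ? x ? Hux Wx]; subst.
  exists x; split; [exact Hux |].
  pose proof (gdist_min Wx); pose proof (gdist_triangle u x v); rewrite (gdist_adj Hux) in *; lia.
Qed.

Lemma gdist_base_common_neighbor u x y : gdist u x = 1 -> gdist u y = 1 ->
  exists z, adj x z /\ adj y z /\ S (gdist u z) = 1.
Proof.
  intros Hx Hy; exists u; rewrite gdist_refl; rewrite gdist_sym in Hx, Hy.
  repeat split; auto using gdist_eq1.
Qed.

Hypothesis adj_wm : weakly_modular adj.

Lemma gdist_triangle_condition u x y K : adj x y -> gdist u x = K -> gdist u y = K ->
  exists z, adj x z /\ adj y z /\ S (gdist u z) = K.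
Proof.
  intros Hxy Hx Hy; destruct K as [| [| K]].
  - apply gdist_eq0 in Hx; apply gdist_eq0 in Hy; subst; contradiction (adj_irrefl Hxy).
  - apply gdist_base_common_neighbor; assumption.
  - destruct (proj1 (adj_wm u) x y (S (S K))) as (z & Hxz & Hyz & Hz);
      [apply dist_of_gdist, gdist_adj, Hxy | lia | apply dist_of_gdist, Hx
      | apply dist_of_gdist, Hy |].
    apply dist_gdist in Hz; exists z; repeat split; auto; lia.
Qed.

Lemma gdist_common_lower_neighbor u x y c K : adj x c -> adj y c -> x <> y ->
  gdist u x = K -> gdist u y = K -> gdist u c = S K ->
  exists z, adj x z /\ adj y z /\ S (gdist u z) = K.
Proof.
  intros Hxc Hyc Hxy Hx Hy Hc.
  pose proof (gdist_triangle x c y) as Hxy2.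
  rewrite (gdist_adj Hxc), (gdist_adj (adj_sym Hyc)) in Hxy2.
  destruct (gdist x y) as [| [| [|]]] eqn:E; [apply gdist_eq0 in E; contradiction | | | lia].
  - apply gdist_triangle_condition; auto using gdist_eq1.
  - destruct K as [| [| K]].
    + apply gdist_eq0 in Hx; apply gdist_eq0 in Hy; subst; contradiction.
    + apply gdist_base_common_neighbor; assumption.
    + destruct (proj2 (adj_wm u) x y c (S (S K))) as (z & Hxz & Hyz & Hz);
        [apply dist_of_gdist, gdist_adj, Hxc | apply dist_of_gdist, gdist_adj, Hyc
        | apply dist_of_gdist, E | lia | apply dist_of_gdist, Hx | apply dist_of_gdist, Hy
        | apply dist_of_gdist; lia |].
      apply dist_gdist in Hz; exists z; repeat split; auto; lia.
Qed.

Variables (le : V -> V -> Prop) (parent : V -> V) (r : V).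
Hypothesis le_antisym : forall x y, le x y -> le y x -> x = y.
Hypothesis le_trans : forall x y z, le x y -> le y z -> le x z.
Hypothesis le_total : forall x y, le x y \/ le y x.
Hypothesis r_least : is_least le r.
Hypothesis parent_le : forall x, le (parent x) x.
Hypothesis parent_le_adj : forall x y, adj y x -> le (parent x) y.
Hypothesis parent_mono : forall x y, le x y -> le (parent x) (parent y).
Hypothesis parent_adj_least : forall x, ~ is_least le x -> adj (parent x) x.

Lemma nle_le x y : ~ le y x -> le x y /\ x <> y.
Proof.
  intros Hyx; destruct (le_total x y) as [Hxy | Hxy]; [| contradiction].
  split; [exact Hxy | intros ->; auto].
Qed.

Lemma le_root x : le x r -> x = r.
Proof. intros Hxr; apply le_antisym; [exact Hxr | apply r_least]. Qed.

Lemma parent_adj x : x <> r -> adj (parent x) x.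
Proof.
  intros Hxr; apply parent_adj_least; intros Hleast.
  apply Hxr, le_root, Hleast.
Qed.

Lemma parent_root : parent r = r.
Proof. apply le_root, parent_le. Qed.

Lemma gdist_parent_le x : gdist x (parent x) <= 1.
Proof.
  destruct (classic (x = r)) as [-> | Hxr].
  - rewrite parent_root, gdist_refl; lia.
  - rewrite gdist_sym, (gdist_adj (parent_adj Hxr)); lia.
Qed.

Definition level (x : V) : nat := gdist r x.

Lemma level_root : level r = 0.
Proof. apply gdist_refl. Qed.

Lemma level_eq0 x : level x = 0 -> x = r.
Proof. intros H; symmetry; apply gdist_eq0, H. Qed.

Lemma level_adj x y : adj x y -> level y <= S (level x).
Proof. apply gdist_adj_le. Qed.

Lemma level_lt n x y : level x <= n -> n < level y -> ~ le y x.
Proof.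
  revert x y; induction n as [| n IH]; intros x y Hx Hy Hyx.
  - assert (x = r) as -> by (apply level_eq0; lia).
    rewrite (le_root Hyx), level_root in Hy; lia.
  - destruct (Nat.eq_dec (level x) (S n)) as [Ex | Ex]; [| apply (IH x y); auto; lia].
    unfold level in Ex; rewrite gdist_sym in Ex.
    destruct (gdist_step Ex) as (z & Hxz & Hz); rewrite gdist_sym in Hz.
    assert (Hyr : y <> r) by (intros ->; rewrite level_root in Hy; lia).
    pose proof (level_adj (parent_adj Hyr)).
    apply (IH z (parent y)); [unfold level; lia | lia |].
    apply le_trans with (parent x); [apply parent_mono, Hyx | apply parent_le_adj, adj_sym, Hxz].
Qed.

Lemma level_mono x y : le x y -> level x <= level y.
Proof.
  intros Hxy; destruct (Nat.le_gt_cases (level x) (level y)) as [H | H]; [exact H |].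
  contradiction (level_lt (le_n _) H Hxy).
Qed.

Lemma level_parent x : x <> r -> S (level (parent x)) = level x.
Proof.
  intros Hxr; pose proof (level_adj (parent_adj Hxr)) as Hup.
  destruct (level x) as [| n] eqn:E; [contradiction (Hxr (level_eq0 E)) |].
  unfold level in E; rewrite gdist_sym in E.
  destruct (gdist_step E) as (z & Hxz & Hz); rewrite gdist_sym in Hz.
  assert (Hpz : le (parent x) z) by apply parent_le_adj, adj_sym, Hxz.
  destruct (Nat.le_gt_cases (level (parent x)) n) as [Hle | Hgt]; [lia |].
  contradiction (@level_lt n z (parent x)); unfold level; lia.
Qed.

Definition ancestor (q : nat) (x : V) : V := Nat.iter q parent x.

Lemma ancestor_mono q x y : le x y -> le (ancestor q x) (ancestor q y).
Proof. intros Hxy; induction q as [| q IH]; [exact Hxy | apply parent_mono, IH]. Qed.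

Lemma ancestor_level q x : q <= level x -> level (ancestor q x) + q = level x.
Proof.
  induction q as [| q IH]; intros Hq; [apply Nat.add_0_r |].
  assert (Hr : ancestor q x <> r).
  { intros E; pose proof (IH ltac:(lia)) as H; rewrite E, level_root in H; lia. }
  change (ancestor (S q) x) with (parent (ancestor q x)).
  pose proof (level_parent Hr); pose proof (IH ltac:(lia)); lia.
Qed.

Lemma ancestor_adj q x : q < level x -> adj (ancestor (S q) x) (ancestor q x).
Proof.
  intros Hq; apply parent_adj; intros E.
  pose proof (ancestor_level (Nat.lt_le_incl _ _ Hq)) as H; rewrite E, level_root in H; lia.
Qed.

Lemma gdist_ancestor q x : gdist x (ancestor q x) <= q.
Proof.
  induction q as [| q IH]; [rewrite gdist_refl; lia |].
  change (ancestor (S q) x) with (parent (ancestor q x)).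
  pose proof (gdist_triangle x (ancestor q x) (parent (ancestor q x))).
  pose proof (gdist_parent_le (ancestor q x)); lia.
Qed.

Section FixedVertex.
Variable v : V.
Hypothesis v_not_root : v <> r.

(* [early z] says that [z] lies in A_(parent v), the part of the BFS discovered
   before the parent of [v] is visited. *)
Definition early (z : V) : Prop := z = r \/ ~ le (parent v) (parent z).

Lemma early_before z : early z -> ~ le v z.
Proof.
  intros [-> | Hz] Hvz; [exact (v_not_root (le_root Hvz)) | apply Hz, parent_mono, Hvz].
Qed.

Lemma early_of_level z : level z < level v -> early z.
Proof.
  intros Hz; destruct (classic (z = r)) as [Hzr | Hzr]; [left; exact Hzr | right].
  pose proof (level_parent Hzr); pose proof (level_parent v_not_root).
  apply (@level_lt (level (parent z))); lia.
Qed.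

Lemma descent_along_ancestors u k i : i < level u ->
  (forall l, l <= i -> gdist v (ancestor l u) = k + l) ->
  forall m, m <= i -> forall y, adj y (ancestor m u) -> S (gdist v y) = k + m ->
  level y + m <= level u ->
  exists x, adj x u /\ S (gdist v x) = k /\ level x <= level y + m /\
    (~ early x -> le (ancestor m (parent v)) (parent y)).
Proof.
  intros Hi Hchain m; induction m as [| m IH]; intros Hm y Hy Hvy Hly.
  - exists y; repeat split; [exact Hy | lia | lia |].
    intros Hny; apply NNPP; intros Hpy; apply Hny; right; exact Hpy.
  - pose proof (@ancestor_adj m u ltac:(lia)) as Hadj.
    pose proof (@ancestor_level m u ltac:(lia)).
    pose proof (@ancestor_level (S m) u ltac:(lia)).
    assert (Hne : y <> ancestor m u) by (intros ->; lia).
    destruct (@gdist_common_lower_neighbor v y _ _ (k + m) Hy (adj_sym Hadj) Hne)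
      as (y' & Hyy' & Hmy' & Hvy'); [lia | apply Hchain; lia | rewrite Hchain; lia |].
    pose proof (level_adj Hyy').
    destruct (IH ltac:(lia) y' (adj_sym Hmy') Hvy' ltac:(lia))
      as (x & Hxu & Hvx & Hlx & Hearly).
    exists x; repeat split; [exact Hxu | exact Hvx | lia |].
    intros Hnx; apply parent_mono in Hearly; [| exact Hnx].
    apply le_trans with (parent (parent y')); [exact Hearly |].
    apply parent_mono, parent_le_adj, Hyy'.
Qed.

Lemma early_ancestor_close u i : early u -> u <> r ->
  le (ancestor i (parent v)) (ancestor (S i) u) -> gdist v (ancestor (S i) u) <= S i.
Proof.
  intros Hu Hur Hle.
  assert (Heq : ancestor (S i) u = ancestor i (parent v)).
  { apply le_antisym; [| exact Hle].
    unfold ancestor; rewrite Nat.iter_succ_r; apply ancestor_mono.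
    destruct Hu as [-> | Hu]; [contradiction | apply (nle_le Hu)]. }
  pose proof (gdist_ancestor i (parent v)).
  pose proof (gdist_triangle v (parent v) (ancestor i (parent v))).
  rewrite (gdist_adj (adj_sym (parent_adj v_not_root))) in *; rewrite Heq; lia.
Qed.

Lemma early_closer_neighbor u k : early u -> gdist v u = k -> 2 <= k ->
  exists x, adj u x /\ early x /\ S (gdist v x) = k.
Proof.
  intros Hu Hvu Hk.
  assert (Hlu : level u <= level v) by apply level_mono, (nle_le (early_before Hu)).
  destruct (@prefix_or_first_failure (fun l => gdist v (ancestor l u) = k + l) (level u))
    as [Hall | (i & Hi & Hpre & Hfail)]; [cbn; lia | |].
  - (* every ancestor of u recedes from v, so v lies k levels above u *)
    pose proof (Hall _ (le_n _)) as Hvr.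
    pose proof (@ancestor_level (level u) u (le_n _)).
    rewrite (@level_eq0 (ancestor (level u) u)), gdist_sym in Hvr by lia.
    destruct (@gdist_step u v (k - 1)) as (x & Hux & Hxv); [rewrite gdist_sym; lia |].
    exists x; repeat split; [exact Hux | | rewrite gdist_sym; lia].
    apply early_of_level; pose proof (level_adj Hux); unfold level in *; lia.
  - pose proof (@ancestor_adj i u Hi) as Hab.
    pose proof (@ancestor_level i u ltac:(lia)).
    pose proof (@ancestor_level (S i) u ltac:(lia)).
    pose proof (Hpre i (le_n _)) as Ha.
    pose proof (gdist_adj_le v Hab); pose proof (gdist_adj_le v (adj_sym Hab)).
    destruct (Nat.eq_dec (gdist v (ancestor (S i) u)) (k + i)) as [Hb | Hb].
    + destruct (gdist_triangle_condition (adj_sym Hab) Ha Hb) as (t & Hat & Hbt & Ht).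
      pose proof (level_adj Hbt).
      destruct (descent_along_ancestors Hi Hpre (le_n i) (adj_sym Hat) ltac:(lia) ltac:(lia))
        as (x & Hxu & Hvx & _ & Hearly).
      exists x; repeat split; [apply adj_sym, Hxu | | exact Hvx].
      apply NNPP; intros Hnx.
      assert (Hur : u <> r) by (intros ->; rewrite level_root in Hi; lia).
      enough (gdist v (ancestor (S i) u) <= S i) by lia.
      apply early_ancestor_close; [exact Hu | exact Hur |].
      apply le_trans with (parent t); [exact (Hearly Hnx) | apply parent_le_adj, Hbt].
    + destruct (descent_along_ancestors Hi Hpre (le_n i) Hab ltac:(lia) ltac:(lia))
        as (x & Hxu & Hvx & Hlx & _).
      exists x; repeat split; [apply adj_sym, Hxu | apply early_of_level; lia | exact Hvx].
Qed.

Lemma early_neighbor_of_v k : forall u, early u -> gdist u v = S k ->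
  exists x, early x /\ adj x v /\ gdist u x = k.
Proof.
  induction k as [| k IH]; intros u Hu Huv.
  - exists u; repeat split; [exact Hu | apply gdist_eq1, Huv | apply gdist_refl].
  - rewrite gdist_sym in Huv.
    destruct (early_closer_neighbor Hu Huv ltac:(lia)) as (y & Huy & Hy & Hvy).
    destruct (IH y Hy ltac:(rewrite gdist_sym; lia)) as (x & Hx & Hxv & Hyx).
    exists x; repeat split; [exact Hx | exact Hxv |].
    pose proof (gdist_triangle u y x); pose proof (gdist_triangle u x v).
    rewrite (gdist_adj Huy), (gdist_adj Hxv), (gdist_sym u v) in *; lia.
Qed.

Lemma closer_neighbor_before u k : ~ le v u -> gdist u v = S k ->
  exists x, adj x v /\ ~ le v x /\ gdist u x = k.
Proof.
  intros Hu Huv; destruct (classic (early u)) as [He | Hne].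
  - destruct (early_neighbor_of_v He Huv) as (x & Hx & Hxv & Hux).
    exists x; repeat split; [exact Hxv | apply early_before, Hx | exact Hux].
  - (* u was discovered by the parent of v *)
    assert (Hur : u <> r) by (intros ->; apply Hne; left; reflexivity).
    assert (Hpu : parent u = parent v).
    { apply le_antisym; [apply parent_mono, (nle_le Hu) |].
      apply NNPP; intros Hlt; apply Hne; right; exact Hlt. }
    pose proof (parent_adj Hur) as Hpuu; rewrite Hpu in Hpuu.
    pose proof (parent_adj v_not_root) as Hpv.
    destruct k as [| [| k]].
    + exists u; repeat split; [apply gdist_eq1, Huv | exact Hu | apply gdist_refl].
    + exists (parent v); repeat split; [exact Hpv | | rewrite gdist_sym; apply gdist_adj, Hpuu].
      intros Hvp; apply (@adj_irrefl v); rewrite <- (le_antisym (parent_le v) Hvp) at 1.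
      exact Hpv.
    + exfalso; pose proof (gdist_triangle u (parent v) v) as Htri.
      rewrite (gdist_sym u (parent v)), (gdist_adj Hpuu), (gdist_adj Hpv) in Htri; lia.
Qed.

End FixedVertex.

Lemma initial_segment_geodesic w n : forall a c, le a w -> le c w -> gdist a c = n ->
  walk (induced adj (fun z => le z w)) n a c.
Proof.
  induction n as [| n IH]; intros a c Ha Hc Hac.
  - apply gdist_eq0 in Hac as ->; apply walk0.
  - enough (Hle_case : forall a c, le a c -> le c w -> gdist a c = S n ->
      walk (induced adj (fun z => le z w)) (S n) a c).
    { destruct (le_total a c) as [Hle | Hle]; [apply Hle_case; assumption |].
      apply walk_rev; [intros x y (Hx & Hy & Hxy); repeat split; auto |].
      apply Hle_case; [exact Hle | exact Ha | rewrite gdist_sym; exact Hac]. }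
    clear a c Ha Hc Hac; intros a c Hle Hc Hac.
    assert (Hne : a <> c) by (intros ->; rewrite gdist_refl in Hac; discriminate).
    assert (Hcr : c <> r) by (intros ->; apply Hne, le_root, Hle).
    destruct (@closer_neighbor_before c Hcr a n) as (x & Hxc & Hx & Hax);
      [intros Hca; apply Hne, le_antisym; assumption | exact Hac |].
    pose proof (le_trans (proj1 (nle_le Hx)) Hc).
    apply walk_snoc with x; [apply IH; eauto | repeat split; assumption].
Qed.

Lemma parent_distance_preserving : distance_preserving adj le.
Proof.
  intros w a c n Ha Hc [Hwalk Hmin]; split.
  - apply initial_segment_geodesic; [exact Ha | exact Hc |].
    apply dist_gdist; split; assumption.
  - intros m Hm; apply Hmin; apply walk_mono with (2 := Hm).
    intros x y (_ & _ & Hxy); exact Hxy.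
Qed.

End DistancePreserving.

Theorem theorem9p11 (V : Type) (adj : V -> V -> Prop) :
  simple_graph adj -> connected adj -> weakly_modular adj ->
  forall le : V -> V -> Prop, BFS_order adj le -> distance_preserving adj le.
Proof.
  intros [adj_sym adj_irrefl] adj_conn adj_wm le Hbfs w.
  destruct (BFS_order_parent Hbfs) as (parent & p_le & p_le_adj & p_mono & p_adj).
  destruct Hbfs as ((_ & le_antisym & le_trans & le_total & le_min) & _).
  destruct (le_min (fun _ => True) (ex_intro _ w I)) as (r & _ & r_least).
  apply (parent_distance_preserving adj_sym adj_irrefl adj_conn adj_wm (r := r)
    le_antisym le_trans le_total (fun y => r_least y I) p_le p_le_adj p_mono p_adj).
Qed.
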